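(* Let $\lambda,a,b\in\mathbb{C}$ with $\lambda\neq0$ and $ab\neq-1$, and let $s\in\mathbb{C}$ satisfy $s^2=\frac{1}{ab+1}$. Define the following odd $4\times4$ complex matrices: $$T_3^\lambda=\lambda E_{13}+aE_{42},\quad T_2^\lambda=-\lambda E_{14}+aE_{32},\quad D_4^\lambda=\lambda E_{24}+aE_{31},\quad D_1^\lambda=-\lambda E_{23}+aE_{41},$$ $$T_1^\lambda=bE_{14}+\lambda^{-1}E_{32},\quad T_4^\lambda=bE_{13}-\lambda^{-1}E_{42},\quad D_2^\lambda=bE_{23}+\lambda^{-1}E_{41},\quad D_3^\lambda=bE_{24}-\lambda^{-1}E_{31}.$$ Then the linear map $\theta:\widehat{\mathfrak{psl}}(2|2)\to\mathfrak{gl}(2|2)$ given on the basis by $$\theta(\tilde C_{11})=sD_4^\lambda,\ \theta(\tilde C_{12})=sT_2^\lambda,\ \theta(\tilde C_{22})=sT_3^\lambda,\ \theta(\tilde C_{21})=sD_1^\lambda,$$ $$\theta(\tilde B_{11})=sT_4^\lambda,\ \theta(\tilde B_{12})=sT_1^\lambda,\ \theta(\tilde B_{22})=sD_3^\lambda,\ \theta(\tilde B_{21})=sD_2^\lambda,$$ $$\theta(\tilde E_1)=E_{12},\ \theta(\tilde F_1)=E_{21},\ \theta(\tilde H_1)=E_{11}-E_{22},\ \theta(\tilde E_2)=E_{43},\ \theta(\tilde F_2)=E_{34},\ \theta(\tilde H_2)=E_{33}-E_{44},$$ $$\theta(c)=\frac{s^2(ab-1)}{2}I_4,\quad \theta(c_+)=s^2\lambda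 a\,I_4,\quad \theta(c_-)=s^2\lambda^{-1}b\,I_4,$$ is an irreducible representation of the universal central extension $\widehat{\mathfrak{psl}}(2|2)$ on the $(2|2)$-dimensional complex superspace $\mathbb{C}^{2|2}$. This gives a three-parameter family of irreducible $(2|2)$-dimensional representations depending on $(\lambda,a,b)$.
   Context: $\mathfrak{gl}(2|2)$ denotes the Lie superalgebra of complex $4\times4$ matrices acting on $\mathbb{C}^{2|2}$, with basis vectors $1,2$ even and $3,4$ odd, with supercommutator bracket $[X,Y]=XY-(-1)^{p(X)p(Y)}YX$; $E_{kl}$ is the matrix unit at $(k,l)$ and $I_4$ the identity. $\mathfrak{sl}(2|2)$ consists of matrices $\begin{pmatrix}A&B\\ C&D\end{pmatrix}$ ($2\times2$ blocks) with $\mathrm{tr}A=\mathrm{tr}D$, and $\mathfrak{psl}(2|2)=\mathfrak{sl}(2|2)/\mathbb{C}I_4$. In $\mathfrak{psl}(2|2)$ let $\tilde E_1,\tilde F_1,\tilde H_1,\tilde E_2,\tilde F_2,\tilde H_2$ be the images of $E_{12},E_{21},E_{11}-E_{22},E_{43},E_{34},E_{33}-E_{44}$, and for $i,j\in\{1,2\}$ let $\tilde B_{ij}$ be the image of $E_{i,j+2}$ and $\tilde C_{ij}$ the image of $E_{i+2,j}$ (these 14 elements form a basis of $\mathfrak{psl}(2|2)$). The universal central extension is $\widehat{\mathfrak{psl}}(2|2)=\mathfrak{psl}(2|2)\oplus\mathrm{Span}(c_+,c,c_-)$ with $c,c_\pm$ even and central and bracket $[(g_1,x_1),(g_2,x_2)]=([g_1,g_2],f(g_1,g_2))$,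 where the 2-cocycle $f$ is supersymmetric on odd elements, vanishes if an argument is even, and on odd basis elements is given by $f(\tilde B_{12},\tilde C_{21})=f(\tilde C_{12},\tilde B_{21})=f(\tilde C_{22},\tilde B_{22})=f(\tilde B_{11},\tilde C_{11})=c$, $f(\tilde C_{22},\tilde C_{11})=-f(\tilde C_{12},\tilde C_{21})=c_+$, $f(\tilde B_{12},\tilde B_{21})=-f(\tilde B_{11},\tilde B_{22})=c_-$, and zero on all other pairs of basis elements (up to symmetry). An element $g\in\mathfrak{psl}(2|2)$ is identified with $(g,0)$. *)

From HB Require Import structures.
From mathcomp Require Import all_boot all_order all_algebra.
From mathcomp Require Import complex.
Set Implicit Arguments. Unset Strict Implicit. Unset Printing Implicit Defensive.
Import Order.TTheory GRing.Theory Num.Theory.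
Local Open Scope ring_scope.

(* Basis of psl(2|2): images of E12, E21, E11-E22, E43, E34, E33-E44,
   B_ij = E_{i,j+2}, C_ij = E_{i+2,j}. *)
Inductive pb := E1 | F1 | H1 | E2 | F2 | H2
              | B11 | B12 | B21 | B22 | C11 | C12 | C21 | C22.
Scheme Equality for pb.
Inductive cb := cc | cplus | cminus.
Scheme Equality for cb.

Definition pb_all : seq pb :=
  [:: E1; F1; H1; E2; F2; H2; B11; B12; B21; B22; C11; C12; C21; C22].
Definition cb_all : seq cb := [:: cc; cplus; cminus].

Definition pb_odd (x : pb) : bool :=
  match x with B11 | B12 | B21 | B22 | C11 | C12 | C21 | C22 => true
             | _ => false end.

(* An element of hat-psl(2|2) = psl(2|2) (+) Span(c,c_+,c_-) is given by its
   coordinates (u : pb -> F, z : cb -> F) in the basis above. *)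
Definition pbasis (F : fieldType) (x : pb) : pb -> F :=
  fun y => if pb_beq x y then 1 else 0.
Definition cbasis (F : fieldType) (c : cb) : cb -> F :=
  fun d => if cb_beq c d then 1 else 0.
Definition zero_p (F : fieldType) : pb -> F := fun _ => 0.
Definition zero_c (F : fieldType) : cb -> F := fun _ => 0.

(* matrix unit E_{kl} (1-based indices) in gl(2|2) *)
Definition Emx (F : fieldType) (k l : nat) : 'M[F]_4 :=
  delta_mx (inord k.-1) (inord l.-1).

(* basis vectors 1,2 are even, 3,4 are odd (0-based: 0,1 even; 2,3 odd) *)
Definition idx_odd (i : 'I_4) : bool := (2 <= i)%N.

Definition homog (F : fieldType) (p : bool) (M : 'M[F]_4) : Prop :=
  forall i j : 'I_4, addb (idx_odd i) (idx_odd j) != p -> M i j = 0.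

Definition scomm (F : fieldType) (p q : bool) (X Y : 'M[F]_4) : 'M[F]_4 :=
  X *m Y - (if p && q then -1 else 1) *: (Y *m X).

(* the chosen representative in sl(2|2) of each basis element of psl(2|2) *)
Definition psl_rep (F : fieldType) (x : pb) : 'M[F]_4 :=
  match x with
  | E1 => Emx F 1 2 | F1 => Emx F 2 1 | H1 => Emx F 1 1 - Emx F 2 2
  | E2 => Emx F 4 3 | F2 => Emx F 3 4 | H2 => Emx F 3 3 - Emx F 4 4
  | B11 => Emx F 1 3 | B12 => Emx F 1 4 | B21 => Emx F 2 3 | B22 => Emx F 2 4
  | C11 => Emx F 3 1 | C12 => Emx F 3 2 | C21 => Emx F 4 1 | C22 => Emx F 4 2
  end.

Definition psl_lin (F : fieldType) (w : pb -> F) : 'M[F]_4 :=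
  \sum_(x <- pb_all) w x *: psl_rep F x.

Definition cocycle_raw (F : fieldType) (x y : pb) (c : cb) : F :=
  match x, y, c with
  | B12, C21, cc => 1 | C12, B21, cc => 1 | C22, B22, cc => 1 | B11, C11, cc => 1
  | C22, C11, cplus => 1 | C12, C21, cplus => -1
  | B12, B21, cminus => 1 | B11, B22, cminus => -1
  | _, _, _ => 0
  end.

Definition cocycle (F : fieldType) (x y : pb) : cb -> F :=
  fun c => if pb_odd x && pb_odd y
           then cocycle_raw F x y c + cocycle_raw F y x c else 0.

(* The bracket of basis elements
   x, y of psl(2|2) in hat-psl(2|2) is ([x,y], f(x,y)) where [x,y] in psl(2|2)
   has coordinates w, i.e. psl_lin w is congruent modulo C*I_4 to the
   supercommutator of the representatives; central elements bracket to 0. *)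
Definition is_rep_hpsl (F : fieldType)
    (th : (pb -> F) -> (cb -> F) -> 'M[F]_4) : Prop :=
  [/\ (forall (k : F) (u1 u2 : pb -> F) (z1 z2 : cb -> F),
         th (fun x => k * u1 x + u2 x) (fun c => k * z1 c + z2 c)
         = k *: th u1 z1 + th u2 z2),
      (forall x : pb, homog (pb_odd x) (th (pbasis F x) (zero_c F))),
      (forall c : cb, homog false (th (zero_p F) (cbasis F c))),
      (forall (x y : pb) (w : pb -> F),
         (exists k : F, psl_lin w
              - scomm (pb_odd x) (pb_odd y) (psl_rep F x) (psl_rep F y) = k%:M) ->
         th w (cocycle F x y)
         = scomm (pb_odd x) (pb_odd y)
             (th (pbasis F x) (zero_c F)) (th (pbasis F y) (zero_c F)))
    & (forall (c : cb) (x : pb),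
         scomm false (pb_odd x) (th (zero_p F) (cbasis F c))
               (th (pbasis F x) (zero_c F)) = 0
         /\ forall d : cb,
         scomm false false (th (zero_p F) (cbasis F c))
               (th (zero_p F) (cbasis F d)) = 0)].

Definition even_proj (F : fieldType) : 'M[F]_4 :=
  \matrix_(i, j) (if (i == j) && ~~ idx_odd i then 1 else 0).

(* Subspaces are
   row spaces of U; vectors are rows, so v |-> th(g) v reads u |-> u *m th(g)^T. *)
Definition is_irreducible_srep (F : fieldType)
    (th : (pb -> F) -> (cb -> F) -> 'M[F]_4) : Prop :=
  forall U : 'M[F]_4,
    (U *m even_proj F <= U)%MS ->
    (forall (u : pb -> F) (z : cb -> F), (U *m (th u z)^T <= U)%MS) ->
    U = 0 \/ row_full U.

Definition T3m (F : fieldType) (l a : F) : 'M[F]_4 := l *: Emx F 1 3 + a *: Emx F 4 2.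
Definition T2m (F : fieldType) (l a : F) : 'M[F]_4 := - l *: Emx F 1 4 + a *: Emx F 3 2.
Definition D4m (F : fieldType) (l a : F) : 'M[F]_4 := l *: Emx F 2 4 + a *: Emx F 3 1.
Definition D1m (F : fieldType) (l a : F) : 'M[F]_4 := - l *: Emx F 2 3 + a *: Emx F 4 1.
Definition T1m (F : fieldType) (l b : F) : 'M[F]_4 := b *: Emx F 1 4 + l^-1 *: Emx F 3 2.
Definition T4m (F : fieldType) (l b : F) : 'M[F]_4 := b *: Emx F 1 3 - l^-1 *: Emx F 4 2.
Definition D2m (F : fieldType) (l b : F) : 'M[F]_4 := b *: Emx F 2 3 + l^-1 *: Emx F 4 1.
Definition D3m (F : fieldType) (l b : F) : 'M[F]_4 := b *: Emx F 2 4 - l^-1 *: Emx F 3 1.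

Definition theta_psl (F : fieldType) (l a b s : F) (x : pb) : 'M[F]_4 :=
  match x with
  | C11 => s *: D4m l a | C12 => s *: T2m l a
  | C22 => s *: T3m l a | C21 => s *: D1m l a
  | B11 => s *: T4m l b | B12 => s *: T1m l b
  | B22 => s *: D3m l b | B21 => s *: D2m l b
  | E1 => Emx F 1 2 | F1 => Emx F 2 1 | H1 => Emx F 1 1 - Emx F 2 2
  | E2 => Emx F 4 3 | F2 => Emx F 3 4 | H2 => Emx F 3 3 - Emx F 4 4
  end.

Definition theta_cent (F : fieldType) (l a b s : F) (c : cb) : 'M[F]_4 :=
  match c with
  | cc => (s ^+ 2 * (a * b - 1) / 2)%:M
  | cplus => (s ^+ 2 * l * a)%:M
  | cminus => (s ^+ 2 * l^-1 * b)%:M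
  end.

Definition theta (F : fieldType) (l a b s : F) (u : pb -> F) (z : cb -> F)
    : 'M[F]_4 :=
  \sum_(x <- pb_all) u x *: theta_psl l a b s x
  + \sum_(c <- cb_all) z c *: theta_cent l a b s c.

From HB Require Import structures.
From mathcomp Require Import all_boot all_algebra.
From mathcomp Require Import complex ring.
Set Implicit Arguments. Unset Strict Implicit. Unset Printing Implicit Defensive.
Import GRing.Theory Num.Theory.
Local Open Scope ring_scope.

(* Write a (2|2)-supermatrix in 2x2 blocks [[A, B], [C, D]] and put
   g = [[p, q], [r, t]] = s [[b, l], [-1/l, a]], so that det g = s^2 (ab + 1) = 1.
   Then theta is the natural action of sl(2|2) precomposed with the twist
   (A, B, C, D) |-> (A, p B + q adj C, r adj B + t C, D), i.e. with the outer
   SL(2)-automorphism g acting on the doublet (B, adj C) of odd blocks.  Since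
   adj X = tr X - X for 2x2 matrices, adj turns the action of the even blocks on
   C into their action on B as soon as tr A = tr D, so the twist respects
   brackets with even elements.
   For two odd elements the polarised Cayley-Hamilton identity
   M adj N + N adj M = (tr M tr N - tr MN) I shows that the anticommutator only
   moves by a scalar; this scalar is a linear combination of the three values of
   the cocycle f, with coefficients the prescribed images of c, c_+ and c_-.
   Irreducibility holds because the algebra generated by theta contains every
   matrix unit: the even part gives the units inside the diagonal blocks, and
   E_kk theta(x) E_ll = theta(x)_kl E_kl reaches across them since theta(C22) and
   theta(B11) have the nonzero entries s l and -s/l. *)

Lemma pb_eqP : Equality.axiom pb_beq.
Proof. by move=> x y; apply: (iffP idP) => [/internal_pb_dec_bl|/internal_pb_dec_lb]. Qed.
HB.instance Definition _ := hasDecEq.Build pb pb_eqP.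

Lemma cb_eqP : Equality.axiom cb_beq.
Proof. by move=> c d; apply: (iffP idP) => [/internal_cb_dec_bl|/internal_cb_dec_lb]. Qed.
HB.instance Definition _ := hasDecEq.Build cb cb_eqP.

Lemma mem_pb_all x : x \in pb_all. Proof. by case: x. Qed.
Lemma mem_cb_all c : c \in cb_all. Proof. by case: c. Qed.

Lemma sum_kronecker_seq (R : pzRingType) (V : lmodType R) (T : eqType) (r : seq T) x
    (v : T -> V) :
  x \in r -> uniq r -> \sum_(y <- r) (if x == y then 1 else 0) *: v y = v x.
Proof.
move=> xr ur; rewrite (bigD1_seq x) //= eqxx scale1r big1 ?addr0 // => y.
by rewrite eq_sym => /negbTE ->; rewrite scale0r.
Qed.

Section Matrix2.
Variable F : fieldType.
Implicit Types (M N : 'M[F]_2).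

Lemma ord2P (i : 'I_2) : i = 0 \/ i = 1.
Proof. by case: i => [[|[|//]] ?]; [left|right]; apply: val_inj. Qed.

Lemma big_ord2 (f : 'I_2 -> F) : \sum_i f i = f 0 + f 1.
Proof. by rewrite big_ord_recl big_ord1; congr (f _ + f _); apply: val_inj. Qed.

Lemma matrix2P M N :
  M 0 0 = N 0 0 -> M 0 1 = N 0 1 -> M 1 0 = N 1 0 -> M 1 1 = N 1 1 -> M = N.
Proof.
by move=> *; apply/matrixP => i j; case: (ord2P i) => ->; case: (ord2P j) => ->.
Qed.

Lemma adj_mx2 M : \adj M = (\tr M)%:M - M.
Proof.
have lift0 : lift (0 : 'I_2) 0 = 1 by apply: val_inj.
have lift1 : lift (1 : 'I_2) 0 = 0 by apply: val_inj.
apply/matrixP => i j; rewrite /adjugate /cofactor /mxtrace big_ord2 !mxE det_mx11 !mxE.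
by case: (ord2P i) => ->; case: (ord2P j) => -> /=; rewrite ?lift0 ?lift1 /=; ring.
Qed.

End Matrix2.

Ltac mx2_expand := apply: matrix2P; rewrite ?adj_mx2 /mxtrace !(mxE, big_ord2) /=.
Ltac mx2_ring := mx2_expand; ring.

Section Matrix2Identities.
Variable F : fieldType.
Implicit Types (M N A B C D : 'M[F]_2) (p q r t : F).

Lemma adj_mx20 : \adj (0 : 'M[F]_2) = 0.
Proof. by mx2_ring. Qed.

(* [polar_det M N = det (M + N) - det M - det N] *)
Definition polar_det M N := \tr M * \tr N - \tr (M *m N).

Lemma polar_detC M N : polar_det M N = polar_det N M.
Proof. by rewrite /polar_det mulrC mxtrace_mulC. Qed.

Lemma polar_det0l M : polar_det 0 M = 0.
Proof. by rewrite /polar_det mul0mx !mxtrace0 mul0r subr0. Qed.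

Lemma twisted_anticomm_ul p q r t B1 C1 B2 C2 :
  (p *: B1 + q *: \adj C1) *m (r *: \adj B2 + t *: C2)
  + (p *: B2 + q *: \adj C2) *m (r *: \adj B1 + t *: C1)
  = (p * t - q * r) *: (B1 *m C2 + B2 *m C1)
    + (q * r * \tr (B1 *m C2 + B2 *m C1) + p * r * polar_det B1 B2
       + q * t * polar_det C1 C2)%:M.
Proof. by rewrite /polar_det; mx2_ring. Qed.

Lemma twisted_anticomm_dr p q r t B1 C1 B2 C2 :
  (r *: \adj B1 + t *: C1) *m (p *: B2 + q *: \adj C2)
  + (r *: \adj B2 + t *: C2) *m (p *: B1 + q *: \adj C1)
  = (p * t - q * r) *: (C1 *m B2 + C2 *m B1)
    + (q * r * \tr (B1 *m C2 + B2 *m C1) + p * r * polar_det B1 B2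
       + q * t * polar_det C1 C2)%:M.
Proof. by rewrite /polar_det; mx2_ring. Qed.

Lemma twisted_comm_ur p q A B C D : \tr A = \tr D ->
  A *m (p *: B + q *: \adj C) - (p *: B + q *: \adj C) *m D
  = p *: (A *m B - B *m D) + q *: \adj (D *m C - C *m A).
Proof.
rewrite /mxtrace !big_ord2 => trAD.
have A11 : A 1 1 = D 0 0 + D 1 1 - A 0 0 by rewrite -trAD; ring.
by mx2_expand; rewrite A11; ring.
Qed.

Lemma twisted_comm_dl r t A B C D : \tr A = \tr D ->
  D *m (r *: \adj B + t *: C) - (r *: \adj B + t *: C) *m A
  = r *: \adj (A *m B - B *m D) + t *: (D *m C - C *m A).
Proof.
rewrite /mxtrace !big_ord2 => trAD.
have A11 : A 1 1 = D 0 0 + D 1 1 - A 0 0 by rewrite -trAD; ring.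
by mx2_expand; rewrite A11; ring.
Qed.

End Matrix2Identities.

Section SuperBlocks.
Variable F : fieldType.
Implicit Types (X Y M : 'M[F]_(2 + 2)).

Definition homog_sl22 (b : bool) M : Prop :=
  if b then exists B C, M = block_mx 0 B C 0
  else exists A D, M = block_mx A 0 0 D /\ \tr A = \tr D.

Definition block_cocycle X Y (c : cb) : F :=
  match c with
  | cc => \tr (ursubmx X *m dlsubmx Y + ursubmx Y *m dlsubmx X)
  | cplus => polar_det (dlsubmx X) (dlsubmx Y)
  | cminus => - polar_det (ursubmx X) (ursubmx Y)
  end.

Lemma block_cocycleC X Y c : block_cocycle X Y c = block_cocycle Y X c.
Proof. by case: c => /=; rewrite 1?addrC 1?polar_detC. Qed.

Lemma block_cocycle_even X Y c : homog_sl22 false X -> block_cocycle X Y c = 0.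
Proof.
case=> A [D [-> _]]; case: c;
by rewrite /= ?block_mxKur ?block_mxKdl ?polar_det0l ?oppr0 ?mul0mx ?mulmx0 ?addr0 ?mxtrace0.
Qed.

Lemma scomm_even_even (A1 D1 A2 D2 : 'M[F]_2) :
  scomm false false (block_mx A1 0 0 D1) (block_mx A2 0 0 D2)
  = block_mx (A1 *m A2 - A2 *m A1) 0 0 (D1 *m D2 - D2 *m D1).
Proof.
rewrite /scomm scale1r !(@mulmx_block _ 2 2 2 2 2 2) !(mul0mx, mulmx0, addr0, add0r).
by rewrite (@opp_block_mx _ 2 2 2 2) (@add_block_mx _ 2 2 2 2) oppr0 addr0.
Qed.

Lemma scomm_even_odd (A D B C : 'M[F]_2) :
  scomm false true (block_mx A 0 0 D) (block_mx 0 B C 0)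
  = block_mx 0 (A *m B - B *m D) (D *m C - C *m A) 0.
Proof.
rewrite /scomm scale1r !(@mulmx_block _ 2 2 2 2 2 2) !(mul0mx, mulmx0, addr0, add0r).
by rewrite (@opp_block_mx _ 2 2 2 2) (@add_block_mx _ 2 2 2 2) oppr0 addr0.
Qed.

Lemma scomm_odd_odd (B1 C1 B2 C2 : 'M[F]_2) :
  scomm true true (block_mx 0 B1 C1 0) (block_mx 0 B2 C2 0)
  = block_mx (B1 *m C2 + B2 *m C1) 0 0 (C1 *m B2 + C2 *m B1).
Proof.
rewrite /scomm scaleN1r opprK !(@mulmx_block _ 2 2 2 2 2 2) !(mul0mx, mulmx0, addr0, add0r).
by rewrite (@add_block_mx _ 2 2 2 2) addr0.
Qed.

Lemma scomm_odd_even X Y : scomm true false X Y = - scomm false true Y X.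
Proof. by rewrite /scomm !scale1r opprB. Qed.

Lemma scomm_scalar_l (k : F) b (M : 'M[F]_4) : scomm false b k%:M M = 0.
Proof. by rewrite /scomm /= scale1r mul_scalar_mx mul_mx_scalar subrr. Qed.

Lemma mxtrace_ul_scomm bX bY X Y : homog_sl22 bX X -> homog_sl22 bY Y ->
  \tr (ulsubmx (scomm bX bY X Y : 'M_(2 + 2))) = block_cocycle X Y cc.
Proof.
case: bX bY => [] [] hX hY.
- case: hX hY => [B1 [C1 ->]] [B2 [C2 ->]].
  by rewrite scomm_odd_odd /= !block_mxKul !block_mxKur !block_mxKdl.
- rewrite block_cocycleC block_cocycle_even //.
  case: hX hY => [B [C ->]] [A [D [-> _]]].
  by rewrite scomm_odd_even scomm_even_odd (@opp_block_mx _ 2 2 2 2) block_mxKul oppr0 mxtrace0.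
- rewrite block_cocycle_even //.
  by case: hX hY => [A [D [-> _]]] [B [C ->]]; rewrite scomm_even_odd block_mxKul mxtrace0.
- rewrite block_cocycle_even //.
  case: hX hY => [A1 [D1 [-> _]]] [A2 [D2 [-> _]]].
  by rewrite scomm_even_even block_mxKul raddfB /= mxtrace_mulC subrr.
Qed.

Lemma homog_sl22_homog b M : homog_sl22 b M -> homog b M.
Proof.
have odd_l (i : 'I_2) : idx_odd (lshift 2 i) = false by rewrite /idx_odd /= leqNgt ltn_ord.
have odd_r (i : 'I_2) : idx_odd (rshift 2 i) by rewrite /idx_odd /= leq_addr.
move=> hM; have {}hM : exists A B C D, M = block_mx A B C D /\
    if b then A = 0 /\ D = 0 else B = 0 /\ C = 0.
  case: b hM => -[M1 [M2 hM]]; first by exists 0, M1, M2, 0.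
  by case: hM => -> _; exists M1, 0, 0, M2.
case: hM => A [B [C [D [-> hABCD]]]] i j.
rewrite -(@splitK 2 2 i) -(@splitK 2 2 j).
case: (@split 2 2 i) => i'; case: (@split 2 2 j) => j' /=; rewrite ?odd_l ?odd_r;
  rewrite ?(@block_mxEul _ 2 2 2 2, @block_mxEur _ 2 2 2 2,
            @block_mxEdl _ 2 2 2 2, @block_mxEdr _ 2 2 2 2);
  by case: b hABCD => -[? ?]; subst; rewrite ?mxE.
Qed.

Lemma homog_scalar (k : F) : homog false (k%:M : 'M[F]_4).
Proof.
move=> i j ij; have /negbTE nij : i != j by apply: contra ij => /eqP->; rewrite addbb.
by rewrite mxE nij mulr0n.
Qed.

End SuperBlocks.

Section Twist.
Variables (F : fieldType) (p q r t : F).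
Implicit Types (X Y M : 'M[F]_(2 + 2)).

Definition twist M : 'M[F]_(2 + 2) :=
  block_mx (ulsubmx M) (p *: ursubmx M + q *: \adj (dlsubmx M))
           (r *: \adj (ursubmx M) + t *: dlsubmx M) (drsubmx M).

Lemma twist_block (A B C D : 'M[F]_2) :
  twist (block_mx A B C D)
  = block_mx A (p *: B + q *: \adj C) (r *: \adj B + t *: C) D.
Proof. by rewrite /twist block_mxKul block_mxKur block_mxKdl block_mxKdr. Qed.

Lemma twist_is_linear : linear twist.
Proof.
move=> a X Y; rewrite -[X]submxK -[Y]submxK scale_block_mx add_block_mx.
by rewrite !twist_block scale_block_mx add_block_mx; congr block_mx; mx2_ring.
Qed.

HB.instance Definition _ :=
  GRing.isLinear.Build F 'M[F]_(2 + 2) 'M[F]_(2 + 2) _ twist twist_is_linear.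

Lemma twist_scalar a : twist a%:M = a%:M.
Proof. by rewrite [a%:M]scalar_mx_block twist_block; congr block_mx; mx2_ring. Qed.

Lemma twist_even (A D : 'M[F]_2) : twist (block_mx A 0 0 D) = block_mx A 0 0 D.
Proof. by rewrite twist_block adj_mx20 !scaler0 !addr0. Qed.

Lemma twist_homog b M : homog_sl22 b M -> homog_sl22 b (twist M).
Proof.
case: b => -[M1 [M2 hM]] /=.
  by rewrite hM twist_block; exists (p *: M1 + q *: \adj M2), (r *: \adj M1 + t *: M2).
by case: hM => -> trM; rewrite twist_even; exists M1, M2.
Qed.

Definition twist_charge (z : cb -> F) : F :=
  z cc * ((p * t + q * r) / 2) + z cplus * (q * t) - z cminus * (p * r).

Lemma twist_scomm_even_odd (A D B C : 'M[F]_2) : \tr A = \tr D ->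
  scomm false true (twist (block_mx A 0 0 D)) (twist (block_mx 0 B C 0))
  = twist (scomm false true (block_mx A 0 0 D) (block_mx 0 B C 0)).
Proof.
move=> trAD; rewrite twist_even !twist_block !scomm_even_odd twist_block.
by rewrite twisted_comm_ur // twisted_comm_dl.
Qed.

Hypothesis det_pqrt : p * t - q * r = 1.
Hypothesis two_neq0 : (2 : F) != 0.

Lemma twist_scomm_odd_odd (B1 C1 B2 C2 : 'M[F]_2)
    (X := block_mx 0 B1 C1 0) (Y := block_mx 0 B2 C2 0) :
  scomm true true (twist X) (twist Y)
  = twist (scomm true true X Y)
    + (twist_charge (block_cocycle X Y) - block_cocycle X Y cc / 2)%:M.
Proof.
rewrite {}/X {}/Y !twist_block !scomm_odd_odd twist_even.
rewrite twisted_anticomm_ul twisted_anticomm_dr det_pqrt !scale1r.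
rewrite /twist_charge /block_cocycle !block_mxKur !block_mxKdl.
rewrite [X in _ = _ + X](@scalar_mx_block _ 2 2) (@add_block_mx _ 2 2 2 2) !add0r.
have -> : p * t = q * r + 1 by rewrite -det_pqrt addrC subrK.
by congr (@block_mx F 2 2 2 2 (_ + _%:M) 0 0 (_ + _%:M)); field.
Qed.

Lemma twist_scomm bX bY X Y : homog_sl22 bX X -> homog_sl22 bY Y ->
  scomm bX bY (twist X) (twist Y)
  = twist (scomm bX bY X Y)
    + (twist_charge (block_cocycle X Y) - block_cocycle X Y cc / 2)%:M.
Proof.
have no_charge : homog_sl22 false X \/ homog_sl22 false Y ->
    (twist_charge (block_cocycle X Y) - block_cocycle X Y cc / 2)%:M = 0 :> 'M_4.
  move=> hXY; have cocycle0 c : block_cocycle X Y c = 0.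
    case: hXY => [|hY]; first exact: block_cocycle_even.
    by rewrite block_cocycleC; exact: block_cocycle_even.
  by rewrite /twist_charge !cocycle0 !(mul0r, add0r, subr0) oppr0 raddf0.
case: bX bY => [] [] hX hY.
- by case: hX hY => [B1 [C1 ->]] [B2 [C2 ->]]; exact: twist_scomm_odd_odd.
- rewrite no_charge ?addr0; last by right.
  rewrite !scomm_odd_even linearN /=; congr (- _).
  by case: hX hY => [B [C ->]] [A [D [-> trAD]]]; exact: twist_scomm_even_odd.
- rewrite no_charge ?addr0; last by left.
  by case: hX hY => [A [D [-> trAD]]] [B [C ->]]; exact: twist_scomm_even_odd.
- rewrite no_charge ?addr0; last by left.
  case: hX hY => [A1 [D1 [-> _]]] [A2 [D2 [-> _]]].
  by rewrite !twist_even scomm_even_even twist_even.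
Qed.

End Twist.

Section Basis.
Variable F : fieldType.

Lemma eq_inord n (i : 'I_n.+1) k : (k <= n)%N -> (i == inord k) = (i == k :> nat).
Proof. by move=> kn; rewrite -val_eqE /= inordK. Qed.

Lemma inord_eq n i j : (i <= n)%N -> (j <= n)%N -> (inord i == inord j :> 'I_n.+1) = (i == j).
Proof. by move=> *; rewrite eq_inord // inordK. Qed.

Lemma mxtrace_delta n (i j : 'I_n) : \tr (delta_mx i j : 'M[F]_n) = (i == j)%:R.
Proof.
rewrite /mxtrace (bigD1 i) //= big1 ?addr0 => [|k /negbTE ki]; rewrite mxE ?eqxx ?ki //.
Qed.

Lemma delta_mx_block_ul m1 m2 n1 n2 (i : 'I_m1) (j : 'I_n1) :
  delta_mx (lshift m2 i) (lshift n2 j) = block_mx (delta_mx i j) 0 0 0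
  :> 'M[F]_(m1 + m2, n1 + n2).
Proof. by rewrite delta_mx_ushift delta_mx_lshift /block_mx row_mx0. Qed.

Lemma delta_mx_block_ur m1 m2 n1 n2 (i : 'I_m1) (j : 'I_n2) :
  delta_mx (lshift m2 i) (rshift n1 j) = block_mx 0 (delta_mx i j) 0 0
  :> 'M[F]_(m1 + m2, n1 + n2).
Proof. by rewrite delta_mx_ushift delta_mx_rshift /block_mx row_mx0. Qed.

Lemma delta_mx_block_dl m1 m2 n1 n2 (i : 'I_m2) (j : 'I_n1) :
  delta_mx (rshift m1 i) (lshift n2 j) = block_mx 0 0 (delta_mx i j) 0
  :> 'M[F]_(m1 + m2, n1 + n2).
Proof. by rewrite delta_mx_dshift delta_mx_lshift /block_mx row_mx0. Qed.

Lemma delta_mx_block_dr m1 m2 n1 n2 (i : 'I_m2) (j : 'I_n2) :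
  delta_mx (rshift m1 i) (rshift n1 j) = block_mx 0 0 0 (delta_mx i j)
  :> 'M[F]_(m1 + m2, n1 + n2).
Proof. by rewrite delta_mx_dshift delta_mx_rshift /block_mx row_mx0. Qed.

Lemma inord_lshift i : (i < 2)%N -> (inord i : 'I_(2 + 2)) = lshift 2 (inord i).
Proof. by move=> i2; apply: val_inj; rewrite /= !inordK // (leq_trans i2). Qed.

Lemma inord_rshift i : (i < 2)%N -> (inord i.+2 : 'I_(2 + 2)) = rshift 2 (inord i).
Proof. by move=> i2; apply: val_inj; rewrite /= !inordK. Qed.

Lemma Emx_ul i j : (i < 2)%N -> (j < 2)%N ->
  Emx F i.+1 j.+1 = block_mx (delta_mx (inord i) (inord j)) 0 0 0 :> 'M[F]_(2 + 2).
Proof. by move=> i2 j2; rewrite /Emx /= !inord_lshift //; exact: delta_mx_block_ul. Qed.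

Lemma Emx_ur i j : (i < 2)%N -> (j < 2)%N ->
  Emx F i.+1 j.+3 = block_mx 0 (delta_mx (inord i) (inord j)) 0 0 :> 'M[F]_(2 + 2).
Proof.
by move=> i2 j2; rewrite /Emx /= inord_lshift // inord_rshift //; exact: delta_mx_block_ur.
Qed.

Lemma Emx_dl i j : (i < 2)%N -> (j < 2)%N ->
  Emx F i.+3 j.+1 = block_mx 0 0 (delta_mx (inord i) (inord j)) 0 :> 'M[F]_(2 + 2).
Proof.
by move=> i2 j2; rewrite /Emx /= inord_rshift // inord_lshift //; exact: delta_mx_block_dl.
Qed.

Lemma Emx_dr i j : (i < 2)%N -> (j < 2)%N ->
  Emx F i.+3 j.+3 = block_mx 0 0 0 (delta_mx (inord i) (inord j)) :> 'M[F]_(2 + 2).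
Proof. by move=> i2 j2; rewrite /Emx /= !inord_rshift //; exact: delta_mx_block_dr. Qed.

Lemma Emx_tr k l : (Emx F k l)^T = Emx F l k.
Proof. exact: trmx_delta. Qed.

Lemma Emx_mul k l m : Emx F k l *m Emx F l m = Emx F k m.
Proof. exact: mul_delta_mx. Qed.

(* The pattern of [Emx_ul] matches every [Emx F k l] (and that of [Emx_ur] every
   unit in the two right columns), so the four rules must be tried in this order. *)
Ltac Emx_to_blocks :=
  rewrite ?Emx_dr // ?Emx_ur // ?Emx_dl // ?Emx_ul //
    ?(@scale_block_mx _ 2 2 2 2, @opp_block_mx _ 2 2 2 2, @add_block_mx _ 2 2 2 2)
    ?(scaler0, oppr0, addr0, add0r).

Lemma theta_psl_twist (l a b s : F) x :
  theta_psl l a b s x = twist (s * b) (s * l) (- (s / l)) (s * a) (psl_rep F x).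
Proof.
case: x; rewrite /= /T3m /T2m /D4m /D1m /T1m /T4m /D2m /D3m.
all: Emx_to_blocks; rewrite twist_block; congr (@block_mx F 2 2 2 2 _ _ _ _).
all: by mx2_expand; rewrite ?eq_inord //=; ring.
Qed.

Lemma psl_rep_homog x : homog_sl22 (pb_odd x) (psl_rep F x).
Proof.
case: x => /=; Emx_to_blocks; do 2 eexists; try split; try reflexivity;
  by rewrite ?raddfB /= ?mxtrace0 ?mxtrace_delta ?inord_eq //= subrr.
Qed.

Lemma mxtrace_ul_psl_rep x : \tr (ulsubmx (psl_rep F x : 'M_(2 + 2))) = 0.
Proof.
case: x => /=; Emx_to_blocks;
  by rewrite block_mxKul ?raddfB /= ?mxtrace0 ?mxtrace_delta ?inord_eq //= subrr.
Qed.

Lemma mxtrace_ul_psl_lin w : \tr (ulsubmx (psl_lin w : 'M[F]_(2 + 2))) = 0.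
Proof.
rewrite /psl_lin /ulsubmx !raddf_sum /=; apply: big1 => x _.
by rewrite !linearZ /= -/(ulsubmx _) mxtrace_ul_psl_rep mulr0.
Qed.

Lemma block_cocycle_odd (B1 C1 B2 C2 : 'M[F]_2) c :
  block_cocycle (block_mx 0 B1 C1 0) (block_mx 0 B2 C2 0) c
  = match c with
    | cc => \tr (B1 *m C2 + B2 *m C1)
    | cplus => polar_det C1 C2
    | cminus => - polar_det B1 B2
    end.
Proof. by case: c; rewrite /= ?block_mxKur ?block_mxKdl. Qed.

Lemma cocycle_psl_rep x y c :
  cocycle F x y c = block_cocycle (psl_rep F x) (psl_rep F y) c.
Proof.
rewrite /cocycle; case: ifP => [/andP[ox oy] | /nandP even_xy]; last first.
  case: even_xy => /negbTE even; [|rewrite block_cocycleC]; rewrite block_cocycle_even //.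
    by move: (psl_rep_homog x); rewrite even.
  by move: (psl_rep_homog y); rewrite even.
case: x ox => //; case: y oy => //= _ _; Emx_to_blocks; rewrite block_cocycle_odd.
all: case: c; rewrite /= /polar_det ?(mul0mx, mulmx0, add0r, addr0, mul_delta_mx_cond).
all: rewrite ?inord_eq //= ?(mulr0n, mulr1n, mxtraceD, mxtrace0, mxtrace_delta).
all: by rewrite ?inord_eq //=; ring.
Qed.

End Basis.
Section Theta.
Variables (F : fieldType) (l a b s : F).

Local Notation tw := (twist (s * b) (s * l) (- (s / l)) (s * a)).
Local Notation charge := (twist_charge (s * b) (s * l) (- (s / l)) (s * a)).

Lemma theta_lin k u1 u2 z1 z2 :
  theta l a b s (fun x => k * u1 x + u2 x) (fun c => k * z1 c + z2 c)
  = k *: theta l a b s u1 z1 + theta l a b s u2 z2.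
Proof.
have sum_lin (T : Type) (xs : seq T) (u v : T -> F) (M : T -> 'M[F]_4) :
    \sum_(x <- xs) (k * u x + v x) *: M x
    = k *: \sum_(x <- xs) u x *: M x + \sum_(x <- xs) v x *: M x.
  rewrite scaler_sumr -big_split; apply: eq_bigr => x _.
  by rewrite scalerDl scalerA.
by rewrite /theta !sum_lin scalerDr addrACA.
Qed.

Lemma theta_pbasis x : theta l a b s (pbasis F x) (zero_c F) = theta_psl l a b s x.
Proof.
rewrite /theta [X in _ + X]big1 ?addr0 => [|c _]; last by rewrite scale0r.
by apply: sum_kronecker_seq (mem_pb_all x) _.
Qed.

Lemma theta_cbasis c : theta l a b s (zero_p F) (cbasis F c) = theta_cent l a b s c.
Proof.
rewrite /theta [X in X + _]big1 ?add0r => [|x _]; last by rewrite scale0r.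
by apply: sum_kronecker_seq (mem_cb_all c) _.
Qed.

Hypothesis l_neq0 : l != 0.

Lemma theta_twist w z : theta l a b s w z = tw (psl_lin w : 'M_(2 + 2)) + (charge z)%:M.
Proof.
rewrite /theta /psl_lin linear_sum /=; congr (_ + _).
  by apply: eq_bigr => x _; rewrite linearZ /= theta_psl_twist.
rewrite /twist_charge !big_cons big_nil addr0 /= !scale_scalar_mx -!raddfD /=; f_equal.
have -> : s * b * (s * a) + s * l * - (s / l) = s ^+ 2 * (a * b - 1) by field.
by ring.
Qed.

Hypothesis s2ab1 : s ^+ 2 * (a * b + 1) = 1.
Hypothesis two_neq0 : (2 : F) != 0.

Lemma theta_bracket x y w :
  (exists k, psl_lin w - scomm (pb_odd x) (pb_odd y) (psl_rep F x) (psl_rep F y) = k%:M) ->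
  theta l a b s w (cocycle F x y)
  = scomm (pb_odd x) (pb_odd y)
      (theta l a b s (pbasis F x) (zero_c F)) (theta l a b s (pbasis F y) (zero_c F)).
Proof.
case=> k hk.
have det_g : s * b * (s * a) - s * l * - (s / l) = 1 by rewrite -s2ab1; field.
have [hX hY] := (psl_rep_homog F x, psl_rep_homog F y).
rewrite !theta_pbasis !theta_psl_twist (twist_scomm det_g two_neq0 hX hY) theta_twist.
have trS := mxtrace_ul_scomm hX hY.
set S := scomm _ _ (psl_rep F x) _ in hk trS *; clearbody S.
set kappa := block_cocycle (psl_rep F x) (psl_rep F y) in trS *.
have pslE : psl_lin w = S + k%:M by rewrite -hk addrC subrK.
(* [k] is pinned down by the top-left traces, which vanish on [psl_lin w] *)
have trk : k *+ 2 = - kappa cc.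
  have := mxtrace_ul_psl_lin w.
  rewrite pslE /ulsubmx !linearD /= -!/(ulsubmx _) trS.
  rewrite (@scalar_mx_block _ 2 2) block_mxKul mxtrace_scalar.
  by move/eqP; rewrite addrC addr_eq0 => /eqP.
rewrite pslE linearD /= twist_scalar -addrA -raddfD /twist_charge !cocycle_psl_rep -/kappa.
have -> : k = - kappa cc / 2 by rewrite -trk; field.
by rewrite /kappa /=; congr (_ + _%:M); ring.
Qed.

Lemma theta_is_rep : is_rep_hpsl (theta l a b s).
Proof.
split.
- exact: theta_lin.
- move=> x; rewrite theta_pbasis theta_psl_twist.
  exact/homog_sl22_homog/twist_homog/psl_rep_homog.
- by move=> c; rewrite theta_cbasis; case: c; exact: homog_scalar.
- by move=> x y w; exact: theta_bracket.
- by move=> c x; split=> [|d]; rewrite !theta_cbasis; case: c; exact: scomm_scalar_l.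
Qed.

End Theta.

Section Irreducibility.
Variable F : fieldType.

Lemma delta_mx_sandwich p m n q (A : 'M[F]_(m, n)) (k : 'I_p) i j (l : 'I_q) :
  delta_mx k i *m A *m delta_mx j l = A i j *: delta_mx k l.
Proof.
apply/matrixP => i1 j1; rewrite !mxE (bigD1 j) //= big1 => [|r /negbTE rj]; last first.
  by rewrite !mxE rj /= mulr0.
rewrite addr0 !mxE (bigD1 i) //= big1 => [|r /negbTE ri]; last first.
  by rewrite !mxE ri andbF mul0r.
rewrite addr0 !mxE !eqxx /= !andbT.
by case: (i1 == k); case: (j1 == l); rewrite /= ?mulr1 ?mul1r ?mulr0 ?mul0r.
Qed.

Lemma stablemx_delta n (U N : 'M[F]_n) i j :
  stablemx U N -> stablemx U (delta_mx i i) -> stablemx U (delta_mx j j) ->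
  N i j != 0 -> stablemx U (delta_mx i j).
Proof.
move=> sN si sj Nij; have := stablemxM (stablemxM si sN) sj.
by rewrite delta_mx_sandwich -scalemxAr (eqmx_scale _ Nij).
Qed.

Lemma stable_delta_row_full n (U : 'M[F]_n) :
  (forall i j, stablemx U (delta_mx i j)) -> U = 0 \/ row_full U.
Proof.
move=> sU; have [->|/matrix0Pn[k [i Uki]]] := eqVneq U 0; [by left | right].
have Ukj j : (delta_mx k j <= U)%MS.
  have := submx_trans (submxMl (delta_mx k k) _) (sU i j).
  by rewrite mulmxA delta_mx_sandwich (eqmx_scale _ Uki).
rewrite -sub1mx mx1_sum_delta; apply/summx_sub => j _.
by rewrite -(mul_delta_mx k); apply: submx_trans (submxMl _ _) (Ukj j).
Qed.

Lemma theta_irreducible (l a b s : F) :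
  l != 0 -> s != 0 -> is_irreducible_srep (theta l a b s).
Proof.
move=> l0 s0 U _ stabU; apply: stable_delta_row_full.
have stabT x : stablemx U (theta_psl l a b s x)^T.
  by rewrite -theta_pbasis; exact: stabU.
pose st k m := stablemx U (Emx F k m).
have comp k m n : st k m -> st m n -> st k n.
  by move=> skm smn; rewrite /st -(Emx_mul F k m n); exact: stablemxM.
have st12 : st 1 2 by have := stabT F1; rewrite /= Emx_tr.
have st21 : st 2 1 by have := stabT E1; rewrite /= Emx_tr.
have st34 : st 3 4 by have := stabT E2; rewrite /= Emx_tr.
have st43 : st 4 3 by have := stabT F2; rewrite /= Emx_tr.
have st31 : st 3 1.
  apply: (stablemx_delta (stabT C22) (comp _ _ _ st34 st43) (comp _ _ _ st12 st21)).
  by rewrite /= !mxE ?inord_eq //= mulr1 mulr0 addr0 mulf_neq0.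
have st24 : st 2 4.
  apply: (stablemx_delta (stabT B11) (comp _ _ _ st21 st12) (comp _ _ _ st43 st34)).
  by rewrite /= !mxE ?inord_eq //= mulr1 mulr0 sub0r mulrN oppr_eq0 mulf_neq0 ?invr_eq0.
have from1 m : (m < 4)%N -> st 1 m.+1.
  case: m => [|[|[|[|//]]]] _ //.
  - exact: (comp _ _ _ st12 st21).
  - exact: (comp _ _ _ st12 (comp _ _ _ st24 st43)).
  - exact: (comp _ _ _ st12 st24).
have to1 k : (k < 4)%N -> st k.+1 1.
  case: k => [|[|[|[|//]]]] _ //.
  - exact: (comp _ _ _ st12 st21).
  - exact: (comp _ _ _ st43 st31).
move=> i j; rewrite -(inord_val i) -(inord_val j).
exact: (comp _ 1 _ (to1 _ (ltn_ord i)) (from1 _ (ltn_ord j))).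
Qed.

End Irreducibility.

Theorem theorem4p4 (R : rcfType) (l a b s : R[i]) :
  l != 0 -> a * b != -1 -> s ^+ 2 = (a * b + 1)^-1 ->
  is_rep_hpsl (theta l a b s) /\ is_irreducible_srep (theta l a b s).
Proof.
move=> l0 ab1 s2.
have det : s ^+ 2 * (a * b + 1) = 1 by rewrite s2 mulVf // addr_eq0.
have s0 : s != 0.
  by apply/eqP => s0; move: det; rewrite s0 expr0n mul0r => /esym/eqP; rewrite oner_eq0.
split; first by apply: theta_is_rep; rewrite ?pnatr_eq0.
exact: theta_irreducible.
Qed.
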